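(* Under the standing assumptions (with $K\neq0$) and $\lambda_{\max}(M(0))<1$, let $r^*\in(0,r_A)$ be the unique profit rate with $\lambda_{\max}(M(r^* ))=1$. Then: (i) for all $0\le r_1<r_2\le r^*$, $\Theta^{price}(r_2)\subsetneq\Theta^{price}(r_1)\subseteq\Theta^{val}$; (ii) $\Theta^{price}(r^* )=\{\mathbf w^*\}$, where $\mathbf w^*$ is the left Perron eigenvector of $M(r^* )$ (all components positive) normalized by $w^*_1=1$; in particular no $\mathbf w\in\Theta^{price}(r^* )$ satisfies $\mathbf w^T(I-M(r^* ))>\mathbf 0^T$ strictly.
   Context: Fix $n\ge 2$. $A$ and $K$ are $n\times n$ entrywise nonnegative real matrices, with $K$ not the zero matrix; $\delta_1,\dots,\delta_n\in(0,1]$, $D=K\,\mathrm{diag}(\delta_1,\dots,\delta_n)$, and $\tilde A=A+D$. $L=\mathrm{diag}(l_1,\dots,l_n)$ with all $l_j>0$. $B$ is an $n\times n$ entrywise nonnegative matrix with no zero column. Standing assumption: $\tilde A$ is irreducible and $\lambda_{\max}(\tilde A)<1$, where $\lambda_{\max}(X)$ denotes the spectral radius of a square matrix $X$. $r_A>0$ is defined by $\lambda_{\max}(\tilde A+r_AK)=1$. For $r\in[0,r_A)$, $M(r):=L[I-\tilde A-rK]^{-1}B$, and $M_0:=M(0)=L(I-\tilde A)^{-1}B$. Vector inequalities are componentwise. The value-feasible domain is $\Theta^{val}:=\{\mathbf c\in\mathbb R^n:\ c_j>0\ \forall j,\ c_1=1,\ \mathbf c^T(I-M_0)\ge \mathbf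 0^T\}$, and the price–wage feasible domain is $\Theta^{price}(r):=\{\mathbf w\in\mathbb R^n:\ w_j>0\ \forall j,\ w_1=1,\ \mathbf w^T(I-M(r))\ge\mathbf 0^T\}$. *)

From HB Require Import structures.
From mathcomp Require Import all_boot all_order all_algebra all_fingroup.
From mathcomp Require Import boolp classical_sets reals.
From mathcomp Require Import complex.
Set Implicit Arguments. Unset Strict Implicit. Unset Printing Implicit Defensive.
Import Order.TTheory GRing.Theory Num.Theory.
Local Open Scope ring_scope.
Local Open Scope classical_set_scope.

Section Defs.
Variable R : realType.

Definition nonneg_mx (m p : nat) (X : 'M[R]_(m, p)) : Prop :=
  forall i j, 0 <= X i j.

Definition ceigenvalue (n : nat) (X : 'M[R]_n) (z : R[i]) : Prop :=
  eigenvalue (map_mx (real_complex R) X) z.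

Definition specrad (n : nat) (X : 'M[R]_n) : R :=
  sup [set x : R | exists z : R[i], ceigenvalue X z /\ x = ComplexField.Normc.normc z].

(* reducible / irreducible square matrix (permutation-similar to block upper triangular) *)
Definition reducible_mx (n : nat) (X : 'M[R]_n) : Prop :=
  exists (s : 'S_n) (k : nat), (0 < k < n)%N /\
    forall i j : 'I_n, (k <= i)%N -> (j < k)%N -> X (s i) (s j) = 0.
Definition irreducible_mx (n : nat) (X : 'M[R]_n) : Prop := ~ reducible_mx X.

Definition Mr (n : nat) (L At K B : 'M[R]_n) (r : R) : 'M[R]_n :=
  L *m invmx (1%:M - At - r *: K) *m B.

Definition rv_ge0 (n : nat) (v : 'rV[R]_n) : Prop := forall j, 0 <= v 0 j.
Definition rv_gt0 (n : nat) (v : 'rV[R]_n) : Prop := forall j, 0 < v 0 j.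

Definition feasible (n : nat) (i1 : 'I_n) (M : 'M[R]_n) : set 'rV[R]_n :=
  [set c | rv_gt0 c /\ c 0 i1 = 1 /\ rv_ge0 (c *m (1%:M - M))].

End Defs.

Definition idx1 (n : nat) (hn : (1 < n)%N) : 'I_n := Ordinal (ltnW hn).

From HB Require Import structures.
From mathcomp Require Import all_boot all_order all_algebra all_fingroup.
From mathcomp Require Import boolp classical_sets reals.
From mathcomp Require Import complex polyrcf.
From mathcomp Require Import ring lra zify.
Set Implicit Arguments. Unset Strict Implicit. Unset Printing Implicit Defensive.
Import Order.TTheory GRing.Theory Num.Theory.
Local Open Scope ring_scope.
Local Open Scope classical_set_scope.

(* For a nonnegative matrix P and t > rho(P), rho being the largest modulus of
   a complex eigenvalue, the resolvent (tI - P)^-1 is nonnegative: it is so for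
   large t, and the set of such t is open and closed in (rho(P), oo).  It is
   entrywise positive when P is irreducible, and Perron vectors of positive and
   of irreducible matrices are read off from it.
   Consequently rho(At + rK) < 1 for r < rA, and M(r) = L (I - At - rK)^-1 B is
   entrywise positive and, by the resolvent identity, strictly increasing in r.
   The normalised row i1 of (I - M(r1))^-1 is feasible for M(r1), but its
   constraint at another column is tight, so it is infeasible for the larger
   M(r2): the inclusions are strict.  At rstar, M(rstar) is positive with
   spectral radius 1; pairing a feasible w with the right Perron vector forces
   w (I - M(rstar)) = 0, and the fixed rows of a positive matrix are the
   multiples of its left Perron vector. *)

Local Notation normc := (@ComplexField.Normc.normc _).

Section SpectralRadius.
Variable R : realType.

Lemma normc_ge0 (z : R[i]) : 0 <= normc z.
Proof. by case: z => a b; rewrite /ComplexField.Normc.normc sqrtr_ge0. Qed.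

Lemma normc_real (x : R) : normc (real_complex R x) = `|x|.
Proof. by rewrite /ComplexField.Normc.normc /= expr0n /= addr0 sqrtr_sqr. Qed.

Lemma normc_sum (I : finType) (f : I -> R[i]) :
  normc (\sum_i f i) <= \sum_i normc (f i).
Proof.
apply: (big_ind2 (fun a b => normc a <= b)) => //.
- by rewrite ComplexField.Normc.normc0.
- move=> a b a' b' ha hb; apply: le_trans (le_normcD (_ : Rcomplex R) _) _.
  exact: lerD.
Qed.

Lemma exists_max_seq (T : eqType) (f : T -> R) (s : seq T) : s != [::] ->
  exists2 x, x \in s & forall y, y \in s -> f y <= f x.
Proof.
elim: s => // a [|b s] IH _.
  by exists a => [|y]; rewrite ?mem_seq1 // => /eqP ->.
have [x xs xmax] := IH isT.
have [fax|fxa] := leP (f a) (f x).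
  exists x => [|y]; first by rewrite in_cons xs orbT.
  by rewrite in_cons => /orP [/eqP -> //|]; exact: xmax.
exists a => [|y]; first by rewrite in_cons eqxx.
by rewrite in_cons => /orP [/eqP -> //|/xmax fyx]; exact: le_trans fyx (ltW fxa).
Qed.

Variable n : nat.
Hypothesis n_gt0 : (0 < n)%N.
Implicit Types P : 'M[R]_n.

Lemma specrad_max P : exists2 z, ceigenvalue P z &
  normc z = specrad P /\ forall z', ceigenvalue P z' -> normc z' <= normc z.
Proof.
set p := char_poly (map_mx (real_complex R) P).
have [s ps] := closed_field_poly_normal p.
have p_monic : lead_coef p = 1 := monicP (char_poly_monic _).
have ceigE z : ceigenvalue P z <-> z \in s.
  by rewrite /ceigenvalue eigenvalue_root_char -/p ps p_monic scale1r
    root_prod_XsubC.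
have s_neq0 : s != [::].
  apply: contra_eqN (size_char_poly (map_mx (real_complex R) P)) => /eqP s0.
  by rewrite -/p ps s0 big_nil p_monic scale1r size_poly1 -(prednK n_gt0).
have [z zs zmax] := exists_max_seq normc s_neq0.
pose E := [set x | exists z, ceigenvalue P z /\ x = normc z].
have Ez : E (normc z) by exists z; split => //; exact/ceigE.
have E_ub : ubound E (normc z) by move=> _ [z' [/ceigE z's ->]]; exact: zmax.
exists z; first exact/ceigE.
split=> [|z' /ceigE]; last exact: zmax.
by apply/eqP; rewrite eq_le ub_le_sup ?ge_sup //; exists (normc z).
Qed.

Lemma specrad_ceigenvalue P : exists2 z, ceigenvalue P z & normc z = specrad P.
Proof. by have [z Pz [zE _]] := specrad_max P; exists z. Qed.

Lemma normc_le_specrad P z : ceigenvalue P z -> normc z <= specrad P.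
Proof. by have [z0 _ [<- z0max]] := specrad_max P; exact: z0max. Qed.

Lemma specrad_ge0 P : 0 <= specrad P.
Proof. by have [z _ <-] := specrad_ceigenvalue P; exact: normc_ge0. Qed.

Lemma char_mx_horner P t :
  map_mx (horner_eval t) (char_poly_mx P) = t%:M - P.
Proof.
apply/matrixP => i j; rewrite !mxE /= horner_evalE.
by rewrite hornerD hornerN hornerMn hornerX hornerC.
Qed.

Lemma horner_char_poly P t : (char_poly P).[t] = \det (t%:M - P).
Proof. by rewrite -char_mx_horner det_map_mx. Qed.

Lemma horner_adj_char_poly_mx P t i j :
  (\adj (char_poly_mx P) i j).[t] = \adj (t%:M - P) i j.
Proof. by rewrite -char_mx_horner -map_mx_adj [RHS]mxE. Qed.

Lemma eigenvalueE P t : eigenvalue P t = (\det (t%:M - P) == 0).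
Proof. by rewrite eigenvalue_root_char /root horner_char_poly. Qed.

Lemma eigenvalue_right P t (z : 'cV[R]_n) :
  z != 0 -> P *m z = t *: z -> eigenvalue P t.
Proof.
move=> z_neq0 Pz; rewrite eigenvalueE; apply: contraR z_neq0 => det_neq0.
have unit_tP : (t%:M - P) \in unitmx by rewrite unitmxE unitfE.
by rewrite -(mulKmx unit_tP z) mulmxBl mul_scalar_mx Pz subrr mulmx0.
Qed.

Lemma ceigenvalue_real P t : ceigenvalue P (real_complex R t) = eigenvalue P t.
Proof.
by rewrite /ceigenvalue !eigenvalue_root_char -map_char_poly fmorph_root.
Qed.

Lemma eigenvalue_le_specrad P t : eigenvalue P t -> `|t| <= specrad P.
Proof. by rewrite -ceigenvalue_real -normc_real; exact: normc_le_specrad. Qed.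

Lemma unitmx_gt_specrad P t : specrad P < t -> (t%:M - P) \in unitmx.
Proof.
move=> Pt; rewrite unitmxE unitfE -eigenvalueE; apply: contraTN Pt.
by move=> /eigenvalue_le_specrad tP; rewrite -leNgt (le_trans (ler_norm t) tP).
Qed.

End SpectralRadius.

Section Positivity.
Variable R : realType.

Definition pos_mx m p (X : 'M[R]_(m, p)) : Prop := forall i j, 0 < X i j.

Lemma ler_sum_term (I : finType) (F : I -> R) i :
  (forall j, 0 <= F j) -> F i <= \sum_j F j.
Proof. by move=> F_ge0; rewrite (bigD1 i) //= lerDl sumr_ge0. Qed.

Lemma exists_argmax (I : finType) (i0 : I) (f : I -> R) :
  exists i, forall k, f k <= f i.
Proof.
by case: (@arg_maxP _ R I i0 xpredT f isT) => i _ fi; exists i => k; exact: fi.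
Qed.

Lemma exists_argmin (I : finType) (i0 : I) (f : I -> R) :
  exists i, forall k, f i <= f k.
Proof.
by case: (@arg_minP _ R I i0 xpredT f isT) => i _ fi; exists i => k; exact: fi.
Qed.

Lemma nonneg_mx_neq0 m p (X : 'M[R]_(m, p)) :
  nonneg_mx X -> X != 0 -> exists i j, 0 < X i j.
Proof.
move=> X_ge0 /eqP X_neq0; apply: contrapT => X_npos; apply/X_neq0/matrixP => i j.
rewrite mxE; apply/eqP; rewrite eq_le X_ge0 andbT leNgt; apply/negP => Xij.
by apply: X_npos; exists i, j.
Qed.

Lemma rv_ge0_neq0 n (v : 'rV[R]_n) : rv_ge0 v -> v != 0 -> exists j, 0 < v 0 j.
Proof.
move=> v_ge0 /(nonneg_mx_neq0 _) [i|i [j vij]]; first by move=> j; rewrite (ord1 i).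
by exists j; rewrite -(ord1 i).
Qed.

Lemma ge0_mulmx_gt0 m n p (X : 'M[R]_(m, n)) (Y : 'M[R]_(n, p)) :
  nonneg_mx X -> (forall i, exists k, 0 < X i k) -> pos_mx Y -> pos_mx (X *m Y).
Proof.
move=> X_ge0 X_row Y_gt0 i j; have [k Xik] := X_row i; rewrite mxE.
apply: lt_le_trans (mulr_gt0 Xik (Y_gt0 k j)) _.
apply: (ler_sum_term (F := fun l => X i l * Y l j)) => l.
by rewrite mulr_ge0 // ltW.
Qed.

Lemma gt0_mulmx_ge0 m n p (X : 'M[R]_(m, n)) (Y : 'M[R]_(n, p)) :
  pos_mx X -> nonneg_mx Y -> (forall j, exists k, 0 < Y k j) -> pos_mx (X *m Y).
Proof.
move=> X_gt0 Y_ge0 Y_col i j; have [k Ykj] := Y_col j; rewrite mxE.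
apply: lt_le_trans (mulr_gt0 (X_gt0 i k) Ykj) _.
apply: (ler_sum_term (F := fun l => X i l * Y l j)) => l.
by rewrite mulr_ge0 // ltW.
Qed.

Lemma rv_ge0_mulmx_gt0 n p (v : 'rV[R]_n) (Y : 'M[R]_(n, p)) :
  rv_ge0 v -> v != 0 -> pos_mx Y -> rv_gt0 (v *m Y).
Proof.
move=> v_ge0 v_neq0 Y_gt0 j; apply: ge0_mulmx_gt0 => // [i k|i].
  by rewrite (ord1 i).
by rewrite (ord1 i); exact: rv_ge0_neq0.
Qed.

Lemma mulmx_gt0_ge0_gt0 m n p q (X : 'M[R]_(m, n))
    (K : 'M[R]_(n, p)) (Y : 'M[R]_(p, q)) :
  pos_mx X -> nonneg_mx K -> K != 0 -> pos_mx Y -> pos_mx (X *m K *m Y).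
Proof.
move=> X_gt0 K_ge0 K_neq0 Y_gt0; have [a [b Kab]] := nonneg_mx_neq0 K_ge0 K_neq0.
apply: ge0_mulmx_gt0 => // [i c|i].
  by rewrite mxE sumr_ge0 // => k _; rewrite mulr_ge0 // ltW.
exists b; rewrite mxE; apply: lt_le_trans (mulr_gt0 (X_gt0 i a) Kab) _.
apply: (ler_sum_term (F := fun k => X i k * K k b)) => k.
by rewrite mulr_ge0 // ltW.
Qed.

Lemma rv_ge0_mulmx_lt n (v : 'rV[R]_n) (P Q : 'M[R]_n) :
  rv_ge0 v -> v != 0 -> (forall i j, P i j < Q i j) ->
  forall j, (v *m P) 0 j < (v *m Q) 0 j.
Proof.
move=> v_ge0 v_neq0 PQ j; rewrite -subr_gt0.
have QP_gt0 : pos_mx (Q - P) by move=> i k; rewrite !mxE subr_gt0.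
by have := rv_ge0_mulmx_gt0 v_ge0 v_neq0 QP_gt0 j; rewrite mulmxBr !mxE -sumrB.
Qed.

Lemma rv_ge0_mulmx_eq0 n (g : 'rV[R]_n) (z : 'cV[R]_n) :
  rv_ge0 g -> pos_mx z -> g *m z = 0 -> g = 0.
Proof.
move=> g_ge0 z_gt0 gz; apply: contra_eq gz => g_neq0; apply/eqP => gz.
by have := rv_ge0_mulmx_gt0 g_ge0 g_neq0 z_gt0 0; rewrite gz mxE ltxx.
Qed.

End Positivity.

Lemma poly_ge0_right (R : realType) (p : {poly R}) a :
  (forall s, a < s -> 0 <= p.[s]) -> 0 <= p.[a].
Proof.
move=> p_ge0; rewrite leNgt; apply/negP => pa_lt0.
have p_neq0 : p != 0 by apply: contraTneq pa_lt0 => ->; rewrite hornerC ltxx.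
have a_lt : a < a + 1 by rewrite ltrDl ltr01.
have [y y_near] := neighpr_wit a_lt p_neq0.
have ay : a < y by move: y_near; rewrite /neighpr in_itv /= => /andP [].
have := sgr_neighpr y_near; rewrite sgp_rightNroot; last by rewrite /root lt_eqF.
rewrite [Num.sg p.[a]]ltr0_sg // => sg_py.
by have := p_ge0 _ ay; rewrite -sgr_ge0 sg_py oppr_ge0 ler10.
Qed.

Section NonnegResolvent.
Variables (R : realType) (n : nat).
Hypothesis n_gt0 : (0 < n)%N.
Implicit Types (P A : 'M[R]_n) (x w u : 'rV[R]_n).

Lemma mulmx_scalarB_entry w P t j :
  (w *m (t%:M - P)) 0 j = t * w 0 j - (w *m P) 0 j.
Proof. by rewrite mulmxBr mul_mx_scalar !mxE. Qed.

Lemma strict_subinvariant_monotone P x t : nonneg_mx P -> rv_gt0 x ->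
  (forall j, (x *m P) 0 j < t * x 0 j) ->
  forall w, rv_ge0 (w *m (t%:M - P)) -> rv_ge0 w.
Proof.
(* The entry where w is most negative relative to x contradicts w P <= t w. *)
move=> P_ge0 x_gt0 xP w wtP_ge0 j; rewrite leNgt; apply/negP => wj_lt0.
have [i imax] := exists_argmax j (fun k => - w 0 k / x 0 k).
set m := - w 0 i / x 0 i in imax.
have m_gt0 : 0 < m by apply: lt_le_trans (imax j); rewrite divr_gt0 // oppr_gt0.
have w_ge k : - m * x 0 k <= w 0 k.
  by have := imax k; rewrite ler_pdivrMr // => ?; lra.
have wi : w 0 i = - m * x 0 i by rewrite /m mulNr divfK ?opprK // gt_eqF.
have wPi : - m * (x *m P) 0 i <= (w *m P) 0 i.
  by rewrite !mxE mulr_sumr; apply: ler_sum => k _; rewrite mulrA ler_wpM2r.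
have := wtP_ge0 i; rewrite mulmx_scalarB_entry wi subr_ge0.
have := xP i; rewrite -subr_gt0 => /(mulr_gt0 m_gt0); lra.
Qed.

Lemma monotone_mx_inv_ge0 A : (forall w, rv_ge0 (w *m A) -> rv_ge0 w) ->
  A \in unitmx /\ nonneg_mx (invmx A).
Proof.
move=> A_mono; have unit_A : A \in unitmx.
  rewrite unitmxE unitfE; apply/negP => /det0P [v /eqP v_neq0 vA]; apply: v_neq0.
  apply/rowP => j; apply/eqP; rewrite mxE eq_le.
  have v_ge0 : rv_ge0 v by apply: A_mono => k; rewrite vA mxE.
  have Nv_ge0 : rv_ge0 (- v) by apply: A_mono => k; rewrite mulNmx vA oppr0 mxE.
  by have := Nv_ge0 j; rewrite mxE oppr_ge0 => ->; rewrite v_ge0.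
split=> // i j; have := A_mono (row i (invmx A)); rewrite -row_mul mulVmx //.
by move=> /(_ _ j); rewrite !mxE; apply=> k; rewrite !mxE ler0n.
Qed.

Definition nonneg_resolvent P t :=
  (t%:M - P) \in unitmx /\ nonneg_mx (invmx (t%:M - P)).

Lemma nonneg_resolvent_subinvariant P x t : nonneg_mx P -> rv_gt0 x ->
  (forall j, (x *m P) 0 j < t * x 0 j) -> nonneg_resolvent P t.
Proof.
move=> P_ge0 x_gt0 xP.
exact/monotone_mx_inv_ge0/(strict_subinvariant_monotone P_ge0 x_gt0 xP).
Qed.

Lemma nonneg_resolvent_large P t : nonneg_mx P -> \sum_i \sum_j P i j < t ->
  nonneg_resolvent P t.
Proof.
move=> P_ge0 Pt; apply: (nonneg_resolvent_subinvariant (x := const_mx 1)) => // j.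
  by rewrite mxE ltr01.
rewrite [const_mx 1 0 j]mxE mulr1 mxE; apply: le_lt_trans Pt; apply: ler_sum => i _.
by rewrite mxE mul1r; apply: (ler_sum_term (F := P i)).
Qed.

Lemma nonneg_resolvent_widen P s : nonneg_mx P -> nonneg_resolvent P s ->
  exists2 d, 0 < d & forall s', s - d < s' -> nonneg_resolvent P s'.
Proof.
(* x = 1 (sI - P)^-1 satisfies x P = s x - 1, a strict subinvariance that
   persists for every s' > s - 1 / (1 + sum_k x_k). *)
move=> P_ge0 [unit_sP inv_ge0].
pose x : 'rV[R]_n := const_mx 1 *m invmx (s%:M - P).
have x_ge0 i : 0 <= x 0 i.
  by rewrite mxE; apply: sumr_ge0 => k _; rewrite mxE mul1r inv_ge0.
have xP_ge0 i : 0 <= (x *m P) 0 i.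
  by rewrite mxE; apply: sumr_ge0 => k _; rewrite mulr_ge0.
have xsP i : s * x 0 i - (x *m P) 0 i = 1.
  by rewrite -mulmx_scalarB_entry /x mulmxKV // mxE.
have x_gt0 : rv_gt0 x.
  move=> i; rewrite lt_def x_ge0 andbT; apply/eqP => xi0.
  by have := xsP i; have := xP_ge0 i; rewrite xi0 mulr0; lra.
set S := \sum_k x 0 k; have S_ge0 : 0 <= S by apply: sumr_ge0.
set d := (1 + S)^-1; have d_gt0 : 0 < d by rewrite invr_gt0; lra.
have dS : d * (1 + S) = 1 by rewrite mulVf //; lra.
exists d => // s' ss'; apply: (nonneg_resolvent_subinvariant P_ge0 x_gt0) => j.
have xj_le : x 0 j <= S by apply: (ler_sum_term (F := fun k => x 0 k)).
have := mulr_gt0 (_ : 0 < d - (s - s')) (x_gt0 j); rewrite ?subr_gt0 // => lt1.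
have := mulr_ge0 (ltW d_gt0) (_ : 0 <= S - x 0 j); rewrite ?subr_ge0 // => le2.
by have := xsP j; lra.
Qed.

Lemma nonneg_resolvent_closed P a : specrad P < a ->
  (forall s, a < s -> nonneg_resolvent P s) -> nonneg_resolvent P a.
Proof.
move=> Pa above; have unit_aP := unitmx_gt_specrad n_gt0 Pa.
split=> // i j.
(* A polynomial in s with the sign of the resolvent entry wherever sI - P is
   invertible. *)
pose f := \adj (char_poly_mx P) i j * char_poly P.
have fE s : (s%:M - P) \in unitmx ->
    f.[s] = invmx (s%:M - P) i j * \det (s%:M - P) ^+ 2.
  move=> unit_sP; have det_neq0 : \det (s%:M - P) != 0 by rewrite -unitfE -unitmxE.
  rewrite hornerM horner_adj_char_poly_mx horner_char_poly /invmx unit_sP.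
  rewrite [in RHS]mxE.
  by field.
have : 0 <= f.[a].
  apply: poly_ge0_right => s aS; have sP : specrad P < s by apply: lt_trans aS.
  rewrite fE ?(unitmx_gt_specrad n_gt0 sP) // mulr_ge0 ?sqr_ge0 //.
  by case: (above s aS).
have det_neq0 : \det (a%:M - P) != 0 by rewrite -unitfE -unitmxE.
by rewrite fE // pmulr_lge0 // lt_def sqr_ge0 andbT sqrf_eq0.
Qed.

Lemma nonneg_resolvent_gt_specrad P t : nonneg_mx P -> specrad P < t ->
  nonneg_resolvent P t.
Proof.
move=> P_ge0 Pt; apply: contrapT => t_bad.
pose bad := [set s | specrad P < s /\ ~ nonneg_resolvent P s].
have bad_bounded : has_ubound bad.
  exists (\sum_i \sum_j P i j) => s [_ s_bad]; rewrite leNgt; apply/negP.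
  by move=> /(nonneg_resolvent_large P_ge0).
have t_le : t <= sup bad by apply: ub_le_sup.
have good_above s : sup bad < s -> nonneg_resolvent P s.
  move=> s_gt; apply: contrapT => s_bad.
  have /(ub_le_sup bad_bounded) : bad s by split => //; lra.
  by rewrite leNgt s_gt.
have [d d_gt0 good_widen] := nonneg_resolvent_widen P_ge0
  (nonneg_resolvent_closed (lt_le_trans Pt t_le) good_above).
have : sup bad <= sup bad - d.
  apply: ge_sup; first by exists t.
  by move=> s [_ s_bad]; rewrite leNgt; apply/negP => /good_widen.
lra.
Qed.

Lemma specrad_lower_bound P y c : nonneg_mx P -> rv_ge0 y -> y != 0 ->
  (forall j, c * y 0 j <= (y *m P) 0 j) -> c <= specrad P.
Proof.
move=> P_ge0 y_ge0 /eqP y_neq0 cy; rewrite leNgt; apply/negP => Pc.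
have [unit_cP inv_ge0] := nonneg_resolvent_gt_specrad P_ge0 Pc.
apply/y_neq0/rowP => j; apply/eqP; rewrite mxE eq_le y_ge0 andbT.
rewrite -(mulmxK unit_cP y) mxE; apply: sumr_le0 => k _.
by apply: mulr_le0_ge0; rewrite ?mulmx_scalarB_entry ?subr_le0.
Qed.

Lemma nonneg_ceigenvalue_norm P z : nonneg_mx P -> ceigenvalue P z ->
  exists2 u, rv_ge0 u /\ u != 0 & forall j, normc z * u 0 j <= (u *m P) 0 j.
Proof.
move=> P_ge0 /eigenvalueP [v vP v_neq0].
exists (\row_j normc (v 0 j)) => [|j]; first split.
- by move=> j; rewrite mxE normc_ge0.
- apply: contraNneq v_neq0 => /rowP u0; apply/eqP/rowP => j.
  by have := u0 j; rewrite !mxE => /ComplexField.Normc.eq0_normc.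
- rewrite mxE -ComplexField.Normc.normcM.
  have -> : z * v 0 j = (z *: v) 0 j by rewrite mxE.
  rewrite -vP mxE; apply: le_trans (normc_sum _) _; rewrite mxE.
  apply: ler_sum => i _; rewrite !mxE ComplexField.Normc.normcM normc_real.
  by rewrite ger0_norm.
Qed.

Lemma pos_mx_superinvariant P u : pos_mx P -> rv_ge0 u -> u != 0 ->
  (forall j, specrad P * u 0 j <= (u *m P) 0 j) -> u *m P = specrad P *: u.
Proof.
move=> P_gt0 u_ge0 u_neq0 uP_ge; set r := specrad P in uP_ge *.
have P_ge0 : nonneg_mx P by move=> i j; exact: ltW.
(* Otherwise y = u P would satisfy (specrad P + e) y <= y P for some e > 0. *)
apply/eqP; rewrite -subr_eq0; apply/eqP; apply: contrapT => /eqP g_neq0.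
set g := u *m P - r *: u in g_neq0.
have gE j : g 0 j = (u *m P) 0 j - r * u 0 j by rewrite !mxE.
have g_ge0 : rv_ge0 g by move=> j; rewrite gE subr_ge0.
have y_gt0 := rv_ge0_mulmx_gt0 u_ge0 u_neq0 P_gt0.
have gP_gt0 := rv_ge0_mulmx_gt0 g_ge0 g_neq0 P_gt0.
have gPE j : (g *m P) 0 j = (u *m P *m P) 0 j - r * (u *m P) 0 j.
  by rewrite mulmxBl -scalemxAl !mxE.
have [i imin] :=
  exists_argmin (Ordinal n_gt0) (fun k => (g *m P) 0 k / (u *m P) 0 k).
set e := (g *m P) 0 i / (u *m P) 0 i in imin.
have e_gt0 : 0 < e by apply: divr_gt0.
have y_neq0 : u *m P != 0.
  by apply/eqP => y0; have := y_gt0 (Ordinal n_gt0); rewrite y0 mxE ltxx.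
have : r + e <= r.
  apply: specrad_lower_bound P_ge0 (fun j => ltW (y_gt0 j)) y_neq0 _ => j.
  by have := imin j; rewrite ler_pdivlMr // gPE mulrDl => ?; lra.
lra.
Qed.

Lemma perron_pos_mx P : pos_mx P ->
  exists2 u, rv_gt0 u & u *m P = specrad P *: u /\ 0 < specrad P.
Proof.
move=> P_gt0; have P_ge0 : nonneg_mx P by move=> i j; exact: ltW.
have [z Pz zE] := specrad_ceigenvalue n_gt0 P.
have [u [u_ge0 u_neq0]] := nonneg_ceigenvalue_norm P_ge0 Pz; rewrite zE => uP_ge.
have uP := pos_mx_superinvariant P_gt0 u_ge0 u_neq0 uP_ge.
have uP_gt0 := rv_ge0_mulmx_gt0 u_ge0 u_neq0 P_gt0; rewrite uP in uP_gt0.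
have r_gt0 : 0 < specrad P.
  rewrite lt_def specrad_ge0 // andbT; apply: contra_eqN (uP_gt0 (Ordinal n_gt0)).
  by move=> /eqP ->; rewrite mxE mul0r ltxx.
by exists u => // j; have := uP_gt0 j; rewrite mxE pmulr_rgt0.
Qed.

End NonnegResolvent.

Section Irreducible.
Variables (R : realType) (n : nat).
Hypothesis n_gt0 : (0 < n)%N.
Implicit Types (X Y : 'M[R]_n) (u : 'rV[R]_n).

Lemma irreducible_closed_set X (Z : {set 'I_n}) : irreducible_mx X ->
  (forall i k, i \in Z -> k \notin Z -> X i k = 0) ->
  Z = finset.set0 \/ Z = finset.setT.
Proof.
move=> X_irr Z_closed.
have [->|[i0 i0Z]] := set_0Vmem Z; first by left.
have [ZC0|[j0 j0ZC]] := set_0Vmem (~: Z).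
  by right; apply/setP => x; move/setP: ZC0 => /(_ x); rewrite !inE => /negbFE.
exfalso; apply: X_irr.
pose s := enum (~: Z) ++ enum Z.
have size_s : size s = n by rewrite size_cat -!cardE addnC cardsC card_ord.
have s_uniq : uniq s.
  rewrite cat_uniq !enum_uniq /= andbT; apply/hasPn => x.
  by rewrite !mem_enum inE => ->.
have s_inj : injective (fun i : 'I_n => nth i0 s i).
  by move=> i j /eqP; rewrite nth_uniq ?size_s // => /eqP /val_inj.
have cardZ : (#|~: Z| + #|Z| = n)%N by rewrite addnC cardsC card_ord.
have Z_gt0 : (0 < #|Z|)%N by apply/card_gt0P; exists i0.
have ZC_gt0 : (0 < #|~: Z|)%N by apply/card_gt0P; exists j0.
exists (perm s_inj), #|~: Z|; split; first by apply/andP; split => //; lia.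
move=> i j ki jk; rewrite !permE; apply: Z_closed.
  rewrite /s nth_cat -cardE ltnNge ki /= -mem_enum; apply: mem_nth.
  by rewrite -cardE ltn_subLR // cardZ.
by rewrite /s nth_cat -cardE jk /= -finset.in_setC -mem_enum mem_nth -?cardE.
Qed.

Lemma irreducible_mx_le X Y : nonneg_mx X -> (forall i j, X i j <= Y i j) ->
  irreducible_mx X -> irreducible_mx Y.
Proof.
move=> X_ge0 XY X_irr [s [k [k_bounds Y_block]]]; apply: X_irr.
exists s, k; split => // i j ki jk.
by apply/eqP; rewrite eq_le X_ge0 andbT -(Y_block i j ki jk) XY.
Qed.

Lemma pos_mx_irreducible X : pos_mx X -> irreducible_mx X.
Proof.
move=> X_gt0 [s [k [/andP [k_gt0 k_lt] X_block]]].
have := X_gt0 (s (Ordinal k_lt)) (s (Ordinal (ltn_trans k_gt0 k_lt))).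
by rewrite X_block ?ltxx.
Qed.

Lemma irreducible_resolvent_gt0 X t : irreducible_mx X -> nonneg_mx X ->
  nonneg_resolvent X t -> pos_mx (invmx (t%:M - X)).
Proof.
move=> X_irr X_ge0 [unit_tX N_ge0] i j; set N := invmx (t%:M - X) in N_ge0 *.
have NE a : t * N a j = (a == j)%:R + \sum_k X a k * N k j.
  move/matrixP: (mulmxV unit_tX) => /(_ a j).
  by rewrite mulmxBl mul_scalar_mx !mxE => ?; lra.
have XN_ge0 a k : 0 <= X a k * N k j by rewrite mulr_ge0.
pose Z : {set 'I_n} := [set a | N a j == 0]%SET.
have ZE a : (a \in Z) = (N a j == 0) by rewrite /Z inE.
have j_notin : j \notin Z.
  rewrite ZE; apply/eqP => Njj; have := NE j; rewrite Njj mulr0 eqxx mulr1n.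
  have : 0 <= \sum_k X j k * N k j by apply: sumr_ge0 => k _; exact: XN_ge0.
  lra.
have Z_closed a k : a \in Z -> k \notin Z -> X a k = 0.
  move=> aZ; rewrite ZE => Nkj; move: (aZ); rewrite ZE => /eqP Naj.
  have a_neq_j : (a == j) = false by apply: contraNF j_notin => /eqP <-.
  have sum0 : \sum_k X a k * N k j = 0.
    by have := NE a; rewrite Naj mulr0 a_neq_j add0r.
  have /eqP := psumr_eq0P (fun k _ => XN_ge0 a k) sum0 (i := k) isT.
  by rewrite mulf_eq0 (negbTE Nkj) orbF => /eqP.
have [Z0|ZT] := irreducible_closed_set X_irr Z_closed; last first.
  by move: j_notin; rewrite ZT inE.
by rewrite lt_def N_ge0 andbT -ZE Z0 inE.
Qed.

Lemma pos_eigenvector_specrad Y (z : 'cV[R]_n) th : nonneg_mx Y -> pos_mx z ->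
  Y *m z = th *: z -> th = specrad Y.
Proof.
move=> Y_ge0 z_gt0 Yz.
have z_neq0 : z != 0.
  by apply/eqP => z0; have := z_gt0 (Ordinal n_gt0) 0; rewrite z0 mxE ltxx.
apply/le_anti/andP; split.
  exact: le_trans (ler_norm th)
    (eigenvalue_le_specrad n_gt0 (eigenvalue_right z_neq0 Yz)).
have [c Yc cE] := specrad_ceigenvalue n_gt0 Y.
have [w [w_ge0 w_neq0]] := nonneg_ceigenvalue_norm Y_ge0 Yc; rewrite cE => wY_ge.
rewrite -(ler_pM2r (rv_ge0_mulmx_gt0 w_ge0 w_neq0 z_gt0 0)).
have -> : th * (w *m z) 0 0 = (w *m Y *m z) 0 0.
  by rewrite -mulmxA Yz -scalemxAr [RHS]mxE.
have -> : specrad Y * (w *m z) 0 0 = (specrad Y *: w *m z) 0 0.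
  by rewrite -scalemxAl [RHS]mxE.
rewrite [leLHS]mxE [leRHS]mxE.
by apply: ler_sum => k _; apply: ler_wpM2r; [exact: ltW | rewrite mxE].
Qed.

Lemma perron_irreducible_right Y : irreducible_mx Y -> nonneg_mx Y ->
  exists2 z : 'cV[R]_n, pos_mx z & Y *m z = specrad Y *: z.
Proof.
(* A Perron vector of the positive matrix (tI - Y)^-1 is an eigenvector of Y. *)
move=> Y_irr Y_ge0; pose t := specrad Y + 1.
have Yt : specrad Y < t by rewrite ltrDl ltr01.
have tY_res := nonneg_resolvent_gt_specrad n_gt0 Y_ge0 Yt.
have N_gt0 := irreducible_resolvent_gt0 Y_irr Y_ge0 tY_res.
set N := invmx (t%:M - Y) in N_gt0.
have NT_gt0 : pos_mx N^T by move=> i j; rewrite mxE.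
have [u u_gt0 [uNT mu_gt0]] := perron_pos_mx n_gt0 NT_gt0.
set mu := specrad N^T in uNT mu_gt0.
have z_gt0 : pos_mx u^T by move=> i j; rewrite mxE (ord1 j).
have Nz : N *m u^T = mu *: u^T by rewrite -[N]trmxK -trmx_mul uNT linearZ.
have tYz : t *: u^T - Y *m u^T = mu^-1 *: u^T.
  rewrite -mul_scalar_mx -mulmxBl -[in RHS](mulKVmx tY_res.1 u^T) -/N Nz.
  by rewrite -scalemxAr scalerA mulVf ?gt_eqF // scale1r.
have Yz : Y *m u^T = (t - mu^-1) *: u^T.
  by rewrite scalerBl -tYz opprB addrC subrK.
exists u^T; first exact: z_gt0.
by rewrite Yz; congr (_ *: _); exact: pos_eigenvector_specrad Y_ge0 z_gt0 Yz.
Qed.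

Lemma irreducible_eigenvector_gt0 Y u th : irreducible_mx Y -> nonneg_mx Y ->
  rv_ge0 u -> u != 0 -> u *m Y = th *: u -> rv_gt0 u.
Proof.
move=> Y_irr Y_ge0 u_ge0 u_neq0 uY; pose t := specrad Y + `|th| + 1.
have rhoY_ge0 := specrad_ge0 n_gt0 Y; have th_le := ler_norm th.
have th_ge0 := normr_ge0 th.
have Yt : specrad Y < t by rewrite /t; lra.
have tY_res := nonneg_resolvent_gt_specrad n_gt0 Y_ge0 Yt.
have uN_gt0 := rv_ge0_mulmx_gt0 u_ge0 u_neq0
  (irreducible_resolvent_gt0 Y_irr Y_ge0 tY_res).
have utY : u *m (t%:M - Y) = (t - th) *: u.
  by rewrite mulmxBr mul_mx_scalar uY scalerBl.
move=> j; rewrite -(mulmxK tY_res.1 u) utY -scalemxAl mxE.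
by rewrite mulr_gt0 ?uN_gt0 // subr_gt0 /t; lra.
Qed.

End Irreducible.

Section Feasible.
Variables (R : realType) (n : nat) (i1 : 'I_n).
Implicit Types (P Q : 'M[R]_n) (w x : 'rV[R]_n).

Lemma mul1Bmx_entry w P j : (w *m (1%:M - P)) 0 j = w 0 j - (w *m P) 0 j.
Proof. by rewrite mulmx_scalarB_entry mul1r. Qed.

Lemma feasible_le P Q : (forall i j, P i j <= Q i j) ->
  feasible i1 Q `<=` feasible i1 P.
Proof.
move=> PQ w [w_gt0 [w1 wQ]]; split=> //; split=> // j.
apply: le_trans (wQ j) _; rewrite !mul1Bmx_entry lerD2l lerN2 !mxE.
by apply: ler_sum => i _; apply: ler_wpM2l; [exact: ltW | exact: PQ].
Qed.

Lemma feasible_strict P Q k : k != i1 -> nonneg_resolvent P 1 -> pos_mx P ->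
  (forall i j, P i j < Q i j) -> exists w, feasible i1 P w /\ ~ feasible i1 Q w.
Proof.
move=> k_neq [unit_P inv_ge0] P_gt0 PQ.
pose w0 := row i1 (invmx (1%:M - P)).
have w0P : w0 *m (1%:M - P) = row i1 1%:M by rewrite -row_mul mulVmx.
have w0_ge0 : rv_ge0 w0 by move=> j; rewrite mxE inv_ge0.
have w0_neq0 : w0 != 0.
  apply: contra_eq_neq w0P => ->; rewrite mul0mx; apply/eqP => /rowP /(_ i1).
  by rewrite !mxE eqxx => /eqP; rewrite eq_sym oner_eq0.
have row1E j : (row i1 (1%:M : 'M[R]_n)) 0 j = (i1 == j)%:R by rewrite !mxE.
have w0E j : w0 0 j = (i1 == j)%:R + (w0 *m P) 0 j.
  by rewrite -row1E -w0P mul1Bmx_entry subrK.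
have w0_gt0 : rv_gt0 w0.
  by move=> j; rewrite w0E ltr_wpDl ?ler0n // rv_ge0_mulmx_gt0.
clearbody w0.
pose w := (w0 0 i1)^-1 *: w0.
have a_gt0 : 0 < (w0 0 i1)^-1 by rewrite invr_gt0.
have wP : w *m (1%:M - P) = (w0 0 i1)^-1 *: row i1 1%:M.
  by rewrite -scalemxAl w0P.
exists w; split.
  split; first by move=> j; rewrite mxE mulr_gt0.
  split; first by rewrite mxE mulVf // gt_eqF.
  by move=> j; rewrite wP !mxE; apply: mulr_ge0; [exact: ltW | exact: ler0n].
case=> _ [_ /(_ k)]; rewrite mul1Bmx_entry.
have w_ge0 : rv_ge0 w by move=> j; rewrite mxE mulr_ge0 ?ltW.
have w_neq0 : w != 0 by rewrite scaler_eq0 negb_or gt_eqF.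
have wPk : w 0 k = (w *m P) 0 k.
  apply/eqP; rewrite -subr_eq0 -mul1Bmx_entry wP !mxE.
  by rewrite [i1 == k]eq_sym (negbTE k_neq) mulr0n mulr0.
by have := rv_ge0_mulmx_lt w_ge0 w_neq0 PQ k; lra.
Qed.

Lemma pos_mx_fixed_unique P ws x : pos_mx P -> rv_gt0 ws -> ws *m P = ws ->
  x *m P = x -> exists c, x = c *: ws.
Proof.
move=> P_gt0 ws_gt0 wsP xP.
(* With c = min_j x_j / ws_j, x - c ws is a nonnegative fixed row with a zero
   entry. *)
have [m mmin] := exists_argmin i1 (fun j => x 0 j / ws 0 j).
pose c := x 0 m / ws 0 m; exists c.
pose d := x - c *: ws.
have d_ge0 : rv_ge0 d.
  by move=> j; have := mmin j; rewrite !mxE subr_ge0 ler_pdivlMr.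
have dm : d 0 m = 0 by rewrite !mxE divfK ?subrr // gt_eqF.
have dP : d *m P = d by rewrite mulmxBl xP -scalemxAl wsP.
apply/eqP; rewrite -subr_eq0 -/d; apply: contraT => d_neq0.
by have := rv_ge0_mulmx_gt0 d_ge0 d_neq0 P_gt0 m; rewrite dP dm ltxx.
Qed.

Lemma feasible_fixed P ws (z : 'cV[R]_n) : pos_mx P -> rv_gt0 ws ->
  ws 0 i1 = 1 -> ws *m P = ws -> pos_mx z -> P *m z = z ->
  feasible i1 P = [set ws].
Proof.
move=> P_gt0 ws_gt0 ws1 wsP z_gt0 Pz; apply/seteqP; split => [x|_ ->] /=.
  move=> [x_gt0 [x1 xP_ge0]].
  have xP0 : x *m (1%:M - P) = 0.
    apply: rv_ge0_mulmx_eq0 xP_ge0 z_gt0 _.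
    by rewrite -mulmxA mulmxBl mul1mx Pz subrr mulmx0.
  have xP : x *m P = x.
    by apply/esym/eqP; rewrite -subr_eq0 -[X in X - _]mulmx1 -mulmxBr xP0.
  have [c xc] := pos_mx_fixed_unique P_gt0 ws_gt0 wsP xP.
  by move: x1; rewrite xc mxE ws1 mulr1 => ->; rewrite scale1r.
by split=> //; split=> // j; rewrite mul1Bmx_entry wsP subrr.
Qed.

End Feasible.

Lemma resolvent_identity (R : comUnitRingType) n (A B : 'M[R]_n) :
  A \in unitmx -> B \in unitmx ->
  invmx B - invmx A = invmx A *m (A - B) *m invmx B.
Proof.
move=> unit_A unit_B.
by rewrite mulmxBr mulmxBl mulVmx // mul1mx -mulmxA mulmxV // mulmx1.
Qed.

Section Technology.
Variables (R : realType) (n : nat).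
Hypothesis n_gt0 : (0 < n)%N.
Variables (At K : 'M[R]_n) (rA : R).
Hypotheses (At_ge0 : nonneg_mx At) (K_ge0 : nonneg_mx K) (K_neq0 : K != 0)
  (At_irr : irreducible_mx At) (rA_ge0 : 0 <= rA)
  (specrad_rA : specrad (At + rA *: K) = 1).

Local Notation Ar r := (At + r *: K).

Lemma Ar_ge0 r : 0 <= r -> nonneg_mx (Ar r).
Proof. by move=> r_ge0 i j; rewrite !mxE addr_ge0 ?mulr_ge0. Qed.

Lemma Ar_irr r : 0 <= r -> irreducible_mx (Ar r).
Proof.
move=> r_ge0; apply: irreducible_mx_le At_ge0 _ At_irr => i j.
by rewrite !mxE lerDl mulr_ge0.
Qed.

Lemma mulmx_Ar_entry (u : 'rV[R]_n) r j :
  (u *m Ar r) 0 j = (u *m At) 0 j + r * (u *m K) 0 j.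
Proof. by rewrite mulmxDr -scalemxAr [LHS]mxE [X in _ + X]mxE. Qed.

Lemma specrad_Ar_lt1 r : 0 <= r -> r < rA -> specrad (Ar r) < 1.
Proof.
(* A nonnegative u <= u Ar(r) pairs with the right Perron vector of Ar(rA) to
   give u Ar(rA) = u, hence u > 0; then (rA - r) u K = 0 contradicts K != 0. *)
move=> r_ge0 r_lt; rewrite ltNge; apply/negP => Ar_ge1.
have [c Arc cE] := specrad_ceigenvalue n_gt0 (Ar r).
have [u [u_ge0 u_neq0]] := nonneg_ceigenvalue_norm (Ar_ge0 r_ge0) Arc.
rewrite cE => uAr_ge.
have uAr j : u 0 j <= (u *m Ar r) 0 j.
  by have := uAr_ge j; have := u_ge0 j; nra.
have uK_ge0 j : 0 <= (u *m K) 0 j.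
  by rewrite mxE sumr_ge0 // => k _; rewrite mulr_ge0.
have rAr_gt0 : 0 < rA - r by rewrite subr_gt0.
pose g := u *m Ar rA - u.
have gE j : g 0 j = (u *m Ar r) 0 j - u 0 j + (rA - r) * (u *m K) 0 j.
  by rewrite [LHS]mxE !mulmx_Ar_entry [(- u) 0 j]mxE; ring.
have g_ge0 : rv_ge0 g.
  by move=> j; rewrite gE addr_ge0 ?mulr_ge0 ?subr_ge0 ?uAr // ltW.
have [z z_gt0 Arz] :=
  perron_irreducible_right n_gt0 (Ar_irr rA_ge0) (Ar_ge0 rA_ge0).
rewrite specrad_rA scale1r in Arz.
have g0 : g = 0.
  by apply: rv_ge0_mulmx_eq0 g_ge0 z_gt0 _; rewrite mulmxBl -mulmxA Arz subrr.
have u_gt0 : rv_gt0 u.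
  apply: (irreducible_eigenvector_gt0 n_gt0 (Ar_irr rA_ge0) (Ar_ge0 rA_ge0))
    u_ge0 u_neq0 (_ : _ = 1 *: u).
  by rewrite scale1r; apply/eqP; rewrite -subr_eq0 -/g g0.
have [a [b Kab]] := nonneg_mx_neq0 K_ge0 K_neq0.
have uK_gt0 : 0 < (u *m K) 0 b.
  rewrite mxE; apply: lt_le_trans (mulr_gt0 (u_gt0 a) Kab) _.
  apply: (ler_sum_term (F := fun k => u 0 k * K k b)) => k.
  by rewrite mulr_ge0 // ltW.
have := gE b; rewrite g0 mxE; have := uAr b; have := mulr_gt0 rAr_gt0 uK_gt0.
lra.
Qed.

Lemma resolvent_Ar_gt0 r : 0 <= r -> r < rA ->
  (1%:M - Ar r) \in unitmx /\ pos_mx (invmx (1%:M - Ar r)).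
Proof.
move=> r_ge0 r_lt; have res := nonneg_resolvent_gt_specrad n_gt0 (Ar_ge0 r_ge0)
  (specrad_Ar_lt1 r_ge0 r_lt).
split; first by case: res.
exact: irreducible_resolvent_gt0 (Ar_irr r_ge0) (Ar_ge0 r_ge0) res.
Qed.

Variables (l : 'rV[R]_n) (B : 'M[R]_n).
Hypotheses (l_gt0 : forall j, 0 < l 0 j) (B_ge0 : nonneg_mx B)
  (B_col : forall j, exists i, B i j != 0).
Local Notation M := (Mr (diag_mx l) At K B).

Lemma MrE r : M r = diag_mx l *m invmx (1%:M - Ar r) *m B.
Proof. by rewrite /Mr opprD addrA. Qed.

Lemma diag_mulmx_gt0 Q : pos_mx Q -> pos_mx (diag_mx l *m Q *m B).
Proof.
move=> Q_gt0 i j; rewrite -mulmxA mul_diag_mx mxE mulr_gt0 //.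
apply: gt0_mulmx_ge0 => // k; have [i' Bi'k] := B_col k.
by exists i'; rewrite lt_def Bi'k B_ge0.
Qed.

Lemma Mr_gt0 r : 0 <= r -> r < rA -> pos_mx (M r).
Proof.
move=> r_ge0 r_lt; rewrite MrE.
exact/diag_mulmx_gt0/(resolvent_Ar_gt0 r_ge0 r_lt).2.
Qed.

Lemma Mr_lt r1 r2 : 0 <= r1 -> r1 < r2 -> r2 < rA ->
  forall i j, M r1 i j < M r2 i j.
Proof.
move=> r1_ge0 r12 r2_lt i j.
have [unit1 N1_gt0] := resolvent_Ar_gt0 r1_ge0 (lt_trans r12 r2_lt).
have [unit2 N2_gt0] := resolvent_Ar_gt0 (le_trans r1_ge0 (ltW r12)) r2_lt.
have dA : (1%:M - Ar r1) - (1%:M - Ar r2) = (r2 - r1) *: K.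
  by apply/matrixP => a b; rewrite !mxE; ring.
have dN_gt0 : pos_mx (invmx (1%:M - Ar r2) - invmx (1%:M - Ar r1)).
  move=> a b; rewrite resolvent_identity // dA -scalemxAr -scalemxAl mxE.
  by rewrite mulr_gt0 ?subr_gt0 // mulmx_gt0_ge0_gt0.
have := diag_mulmx_gt0 dN_gt0 i j.
rewrite mulmxBr mulmxBl -!MrE.
by rewrite [(M r2 - M r1) i j]mxE [(- M r1) i j]mxE subr_gt0.
Qed.

Lemma Mr_le r1 r2 : 0 <= r1 -> r1 <= r2 -> r2 < rA ->
  forall i j, M r1 i j <= M r2 i j.
Proof.
move=> r1_ge0; rewrite le_eqVlt => /predU1P [-> //|r12] r2_lt i j.
exact/ltW/Mr_lt.
Qed.

Variables (i1 : 'I_n) (rstar : R).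
Hypotheses (rstar_gt0 : 0 < rstar) (rstar_lt : rstar < rA)
  (specrad_rstar : specrad (M rstar) = 1).

Lemma feasible_Mrstar : exists ws, rv_gt0 ws /\ ws 0 i1 = 1 /\
  ws *m M rstar = ws /\ feasible i1 (M rstar) = [set ws].
Proof.
have M_gt0 := Mr_gt0 (ltW rstar_gt0) rstar_lt.
have [u u_gt0 [uM _]] := perron_pos_mx n_gt0 M_gt0.
have [z z_gt0 Mz] := perron_irreducible_right n_gt0 (pos_mx_irreducible M_gt0)
  (fun i j => ltW (M_gt0 i j)).
rewrite specrad_rstar scale1r in uM.
rewrite specrad_rstar scale1r in Mz.
pose ws := (u 0 i1)^-1 *: u.
have ws_gt0 : rv_gt0 ws by move=> j; rewrite mxE mulr_gt0 ?invr_gt0.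
have ws1 : ws 0 i1 = 1 by rewrite mxE mulVf ?gt_eqF.
have wsM : ws *m M rstar = ws by rewrite -scalemxAl uM.
exists ws; do !split => //.
exact: feasible_fixed M_gt0 ws_gt0 ws1 wsM z_gt0 Mz.
Qed.

Lemma feasible_Mr_proper k r1 r2 :
  k != i1 -> 0 <= r1 -> r1 < r2 -> r2 <= rstar ->
  feasible i1 (M r2) `<` feasible i1 (M r1).
Proof.
move=> k_neq r1_ge0 r12 r2_le.
have r2_lt : r2 < rA := le_lt_trans r2_le rstar_lt.
have r1_lt : r1 < rstar := lt_le_trans r12 r2_le.
have M1_gt0 := Mr_gt0 r1_ge0 (lt_trans r1_lt rstar_lt).
have [ws [ws_gt0 [_ [wsM _]]]] := feasible_Mrstar.
have ws_neq0 : ws != 0.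
  by apply/eqP => ws0; have := ws_gt0 i1; rewrite ws0 mxE ltxx.
have res1 : nonneg_resolvent (M r1) 1.
  apply: (nonneg_resolvent_subinvariant (fun i j => ltW (M1_gt0 i j)) ws_gt0).
  move=> j; have := rv_ge0_mulmx_lt (fun j => ltW (ws_gt0 j)) ws_neq0
    (Mr_lt r1_ge0 r1_lt rstar_lt) j.
  by rewrite wsM mul1r.
have [w [w_feas w_infeas]] :=
  feasible_strict k_neq res1 M1_gt0 (Mr_lt r1_ge0 r12 r2_lt).
split; first by apply: feasible_le => i j; exact/ltW/Mr_lt.
by move=> sub; apply/w_infeas/sub.
Qed.

End Technology.

Theorem mainTheorem10 (R : realType) (n : nat) (hn : (1 < n)%N)
    (A K B : 'M[R]_n) (delta l : 'rV[R]_n) (rA rstar : R) :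
  nonneg_mx A -> nonneg_mx K -> K != 0 ->
  (forall j, 0 < delta 0 j <= 1) ->
  (forall j, 0 < l 0 j) ->
  nonneg_mx B -> (forall j, exists i, B i j != 0) ->
  let At := A + K *m diag_mx delta in
  let M := Mr (diag_mx l) At K B in
  let i1 := idx1 hn in
  irreducible_mx At -> specrad At < 1 ->
  0 < rA -> specrad (At + rA *: K) = 1 ->
  specrad (M 0) < 1 ->
  0 < rstar < rA -> specrad (M rstar) = 1 ->
  (* (i) *)
  (forall r1 r2 : R, 0 <= r1 -> r1 < r2 -> r2 <= rstar ->
     feasible i1 (M r2) `<` feasible i1 (M r1) /\
     feasible i1 (M r1) `<=` feasible i1 (M 0)) /\
  (* (ii) *)
  (exists wstar : 'rV[R]_n,
     rv_gt0 wstar /\ wstar 0 i1 = 1 /\ wstar *m M rstar = wstar /\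
     feasible i1 (M rstar) = [set wstar]) /\
  (forall w : 'rV[R]_n, feasible i1 (M rstar) w ->
     ~ rv_gt0 (w *m (1%:M - M rstar))).
Proof.
move=> A_ge0 K_ge0 K_neq0 delta_01 l_gt0 B_ge0 B_col At M i1 At_irr _ rA_gt0
  specrad_rA _ /andP [rstar_gt0 rstar_lt] specrad_rstar.
have n_gt0 : (0 < n)%N := ltnW hn.
have rA_ge0 := ltW rA_gt0.
have At_ge0 : nonneg_mx At.
  move=> i j; rewrite mxE mul_mx_diag mxE addr_ge0 ?mulr_ge0 //.
  by case/andP: (delta_01 j) => /ltW.
have k_neq : Ordinal hn != i1 by [].
have [ws [ws_gt0 [ws1 [wsM feasE]]]] := feasible_Mrstar n_gt0 At_ge0 K_ge0 K_neq0
  At_irr rA_ge0 specrad_rA l_gt0 B_ge0 B_col i1 rstar_gt0 rstar_lt specrad_rstar.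
split; [|split].
- move=> r1 r2 r1_ge0 r12 r2_le; split.
    exact: (feasible_Mr_proper n_gt0 At_ge0 K_ge0 K_neq0 At_irr rA_ge0 specrad_rA
      l_gt0 B_ge0 B_col rstar_gt0 rstar_lt specrad_rstar k_neq).
  apply/feasible_le/(Mr_le n_gt0 At_ge0 K_ge0 K_neq0 At_irr rA_ge0 specrad_rA
    l_gt0 B_ge0 B_col) => //; exact: lt_trans r12 (le_lt_trans r2_le rstar_lt).
- by exists ws.
- by move=> w; rewrite feasE => -> /(_ i1); rewrite mul1Bmx_entry wsM subrr ltxx.
Qed.
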